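(* For $\alpha>1$ let $X_\alpha$ be a Pareto random variable with $\mathbb P(X_\alpha>x)=(x/x_{\min})^{-\alpha}$ for $x\ge x_{\min}$, where $x_{\min}=x_{\min}(\alpha)>0$ (e.g. $x_{\min}=(\alpha-1)/\alpha$, so that $\mathbb E[X_\alpha]=1$). Then for every $q\in(0,1)$: (i) $\kappa_q(X_\alpha)=q^{\frac{\alpha-1}{\alpha}}$, independently of $x_{\min}$; (ii) the map $\alpha\mapsto \kappa_q(X_\alpha)$ is strictly convex on $(1,\infty)$; (iii) consequently, if $\alpha_1,\dots,\alpha_m>1$, $\omega_1,\dots,\omega_m>0$ with $\sum_i\omega_i=1$, $\bar\alpha=\sum_{i=1}^m\omega_i\alpha_i$, the $X_{\alpha_i}$ are normalized so that $\mathbb E[X_{\alpha_i}]=1$ for all $i$, and $X$ has the mixture distribution $\sum_{i=1}^m\omega_i\,\mathrm{Law}(X_{\alpha_i})$, then $$\kappa_q(X)\ \ge\ \sum_{i=1}^m\omega_i\,\kappa_q(X_{\alpha_i})\ \ge\ \kappa_q(X_{\bar\alpha}).$$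
   Context: For a positive random variable $Y$ with continuous distribution and finite mean, and $q\in(0,1)$, the exceedance threshold is $h_Y(q)=\inf\{h\ge 0:\ \mathbb P(Y>h)\le q\}$ and the (theoretical) quantile contribution is $$\kappa_q(Y)=q\,\frac{\mathbb E[Y\mid Y>h_Y(q)]}{\mathbb E[Y]}=\frac{\mathbb E[Y\mathbf 1_{Y>h_Y(q)}]}{\mathbb E[Y]}.$$ *)

From Stdlib Require Import Reals Lra ClassicalEpsilon.
Open Scope R_scope.

Fixpoint sumN (m : nat) (f : nat -> R) : R :=
  match m with
  | O => 0
  | S k => sumN k f + f k
  end.

Definition improper_int (f : R -> R) (a l : R) : Prop :=
  (forall b, a <= b -> inhabited (Riemann_integrable f a b)) /\
  (forall eps, 0 < eps -> exists M, forall b (pr : Riemann_integrable f a b),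
      a <= b -> M <= b -> Rabs (RiemannInt pr - l) < eps).

(* A positive random variable Y with continuous law is represented by its density
   f (on (0,oo)).  P(Y > h) = \int_h^\infty f.
   Exceedance threshold h_Y(q) = inf { h >= 0 : P(Y > h) <= q }. *)
Definition exceed_set (f : R -> R) (q : R) (h : R) : Prop :=
  0 <= h /\ exists p, improper_int f h p /\ p <= q.

Definition is_threshold (f : R -> R) (q h : R) : Prop :=
  (forall x, exceed_set f q x -> h <= x) /\
  (forall l, (forall x, exceed_set f q x -> l <= x) -> l <= h) /\
  (exists x, exceed_set f q x).

(* kappa_q(Y) = E[Y 1_{Y > h_Y(q)}] / E[Y], with E[Y] finite and positive. *)
Definition is_kappa (f : R -> R) (q k : R) : Prop :=
  exists h m t,
    is_threshold f q h /\
    improper_int (fun y => y * f y) 0 m /\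
    improper_int (fun y => y * f y) h t /\
    0 < m /\ k = t / m.

(* The (unique, when it exists) quantile contribution, chosen by epsilon. *)
Definition kappa (f : R -> R) (q : R) : R :=
  epsilon (inhabits 0) (fun k => is_kappa f q k).

(* Pareto density with index alpha and scale xmin:
   P(X > x) = (x/xmin)^(-alpha) for x >= xmin. *)
Definition pareto_density (alpha xmin : R) (x : R) : R :=
  if Rle_dec xmin x then alpha * Rpower xmin alpha * Rpower x (- (alpha + 1)) else 0.

(* Normalized scale xmin = (alpha-1)/alpha so that E[X_alpha] = 1. *)
Definition xmin_norm (alpha : R) : R := (alpha - 1) / alpha.

Definition mixture_density (m : nat) (w alpha : nat -> R) (x : R) : R :=
  sumN m (fun i => w i * pareto_density (alpha i) (xmin_norm (alpha i)) x).

(* For the Pareto law P(X > x) = (x0/x)^al, the tail first moment is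
   E[X 1_{X > x}] = al/(al-1) x (x0/x)^al, the threshold is x0 q^(-1/al), and the ratio of
   the two tail moments is q^((al-1)/al) = exp (ln q - ln q / al), whatever x0.  Since
   -ln q > 0, this is an increasing convex function of the strictly convex map al |-> 1/al,
   which gives strict convexity and Jensen's inequality at the mean index.
   For the mixture, every density satisfies T(x) - T(h) >= x (S(x) - S(h)) for its tail
   mass S and tail moment T.  Applying this to each component at its own threshold and
   summing gives T_mix(x) - sum_i w_i kappa_i >= x (S_mix(x) - q), which is nonnegative
   below the threshold of the mixture; continuity of T_mix transfers it to the threshold. *)

From Stdlib Require Import Reals Lra Lia ClassicalEpsilon FunctionalExtensionality.
From Coquelicot Require Import Coquelicot.
Open Scope R_scope.

Lemma improper_int_tail (f G : R -> R) :
  (forall a b, a <= b -> is_RInt f a b (G a - G b)) ->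
  (forall eps, 0 < eps -> exists M, forall b, M <= b -> Rabs (G b) < eps) ->
  forall a, improper_int f a (G a).
Proof.
  intros HI HG a; split.
  - intros b Hb; constructor; apply ex_RInt_Reals_0; eexists; apply HI, Hb.
  - intros eps Heps; destruct (HG eps Heps) as [M HM]; exists M.
    intros b pr Hab HMb; rewrite <- RInt_Reals, (is_RInt_unique _ _ _ _ (HI a b Hab)).
    replace (G a - G b - G a) with (- G b) by ring; rewrite Rabs_Ropp; apply HM, HMb.
Qed.

Lemma improper_int_unique f a l1 l2 :
  improper_int f a l1 -> improper_int f a l2 -> l1 = l2.
Proof.
  intros [Hint L1] [_ L2].
  destruct (Req_dec l1 l2) as [|Hne]; [assumption | exfalso].
  set (eps := Rabs (l1 - l2) / 2).
  assert (Heps : 0 < eps) by (assert (0 < Rabs (l1 - l2)) by (apply Rabs_pos_lt; lra);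
                              unfold eps; lra).
  destruct (L1 eps Heps) as [M1 HM1], (L2 eps Heps) as [M2 HM2].
  set (b := Rmax a (Rmax M1 M2)).
  assert (Hab : a <= b) by apply Rmax_l.
  assert (HM : Rmax M1 M2 <= b) by apply Rmax_r.
  destruct (Hint b Hab) as [pr].
  specialize (HM1 b pr Hab (Rle_trans _ _ _ (Rmax_l _ _) HM)).
  specialize (HM2 b pr Hab (Rle_trans _ _ _ (Rmax_r _ _) HM)).
  assert (Rabs (l1 - l2) <= Rabs (RiemannInt pr - l1) + Rabs (RiemannInt pr - l2)).
  { replace (l1 - l2) with (- (RiemannInt pr - l1) + (RiemannInt pr - l2)) by ring.
    rewrite <- (Rabs_Ropp (RiemannInt pr - l1)); apply Rabs_triang. }
  unfold eps in *; lra.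
Qed.

Lemma improper_int_0 a : improper_int (fun _ => 0) a 0.
Proof.
  apply (improper_int_tail _ (fun _ => 0)).
  - intros b c _; pose proof (is_RInt_const (V := R_NormedModule) b c 0) as H.
    replace (scal (c - b) (0 : R_NormedModule)) with (0 - 0) in H; [exact H|].
    unfold scal; simpl; unfold mult; simpl; ring.
  - intros eps Heps; exists 0; intros; rewrite Rabs_R0; exact Heps.
Qed.

Lemma improper_int_plus_scal f g a l1 l2 c :
  improper_int f a l1 -> improper_int g a l2 ->
  improper_int (fun y => f y + c * g y) a (l1 + c * l2).
Proof.
  intros [I1 L1] [I2 L2]; split.
  - intros b Hb; destruct (I1 b Hb) as [p1], (I2 b Hb) as [p2].
    constructor; apply RiemannInt_P10; assumption.
  - intros eps Heps.
    set (C := Rabs c + 1).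
    assert (HC : 0 < C) by (pose proof (Rabs_pos c); unfold C; lra).
    destruct (L1 (eps / 2)) as [M1 H1]; [lra|].
    destruct (L2 (eps / 2 / C)) as [M2 H2]; [apply Rdiv_lt_0_compat; lra|].
    exists (Rmax M1 M2); intros b pr Hab HM.
    destruct (I1 b Hab) as [p1], (I2 b Hab) as [p2].
    rewrite (RiemannInt_P13 p1 p2 pr).
    specialize (H1 b p1 Hab (Rle_trans _ _ _ (Rmax_l _ _) HM)).
    specialize (H2 b p2 Hab (Rle_trans _ _ _ (Rmax_r _ _) HM)).
    replace (RiemannInt p1 + c * RiemannInt p2 - (l1 + c * l2))
      with ((RiemannInt p1 - l1) + c * (RiemannInt p2 - l2)) by ring.
    eapply Rle_lt_trans; [apply Rabs_triang|]; rewrite Rabs_mult.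
    assert (Rabs c * Rabs (RiemannInt p2 - l2) <= C * (eps / 2 / C))
      by (apply Rmult_le_compat; try apply Rabs_pos; unfold C in *; lra).
    replace (C * (eps / 2 / C)) with (eps / 2) in H by (field; lra).
    lra.
Qed.

Lemma improper_int_sumN m (w : nat -> R) (F : nat -> R -> R) (l : nat -> R) a :
  (forall i, (i < m)%nat -> improper_int (F i) a (l i)) ->
  improper_int (fun y => sumN m (fun i => w i * F i y)) a (sumN m (fun i => w i * l i)).
Proof.
  induction m as [|m IHm]; intros HF; simpl.
  - apply improper_int_0.
  - apply improper_int_plus_scal; [apply IHm; intros i Hi|]; apply HF; lia.
Qed.

Lemma exceed_set_tail f S q :
  (forall x, improper_int f x (S x)) ->
  forall x, exceed_set f q x <-> 0 <= x /\ S x <= q.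
Proof.
  intros HS x; split.
  - intros [Hx [p [Hp Hpq]]]; rewrite (improper_int_unique _ _ _ _ (HS x) Hp); auto.
  - intros [Hx HSx]; split; [|exists (S x)]; auto.
Qed.

Lemma is_threshold_unique f q h1 h2 :
  is_threshold f q h1 -> is_threshold f q h2 -> h1 = h2.
Proof. intros [L1 [G1 _]] [L2 [G2 _]]; apply Rle_antisym; [apply G2 | apply G1]; auto. Qed.

Lemma is_threshold_exists f q :
  (exists x, exceed_set f q x) -> exists h, is_threshold f q h.
Proof.
  intros [x0 Hx0].
  set (lower := fun l => forall x, exceed_set f q x -> l <= x).
  assert (Hbound : bound lower) by (exists x0; intros l Hl; apply Hl, Hx0).
  assert (Hlower : exists l, lower l) by (exists 0; intros x [Hx _]; exact Hx).
  destruct (completeness lower Hbound Hlower) as [h [Hub Hlub]].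
  exists h; split; [|split].
  - intros x Hx; apply Hlub; intros l Hl; apply Hl, Hx.
  - intros l Hl; apply Hub; exact Hl.
  - exists x0; exact Hx0.
Qed.

Lemma is_threshold_tail f S q h :
  (forall x, improper_int f x (S x)) ->
  0 <= h -> S h <= q -> (forall x, 0 <= x -> S x <= q -> h <= x) ->
  is_threshold f q h.
Proof.
  intros HS Hh HSh Hmin; split; [|split].
  - intros x Hx; apply (exceed_set_tail f S q HS) in Hx; apply Hmin; tauto.
  - intros l Hl; apply Hl, (exceed_set_tail f S q HS); auto.
  - exists h; apply (exceed_set_tail f S q HS); auto.
Qed.

Lemma is_threshold_tail_gt f S q h :
  (forall x, improper_int f x (S x)) -> is_threshold f q h ->
  0 <= h /\ forall x, 0 <= x < h -> q < S x.
Proof.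
  intros HS [Hlow [Hglb [x0 Hx0]]]; split.
  - apply Hglb; intros x [Hx _]; exact Hx.
  - intros x Hx; destruct (Rlt_le_dec q (S x)) as [|HSx]; [assumption|].
    assert (h <= x) by (apply Hlow, (exceed_set_tail f S q HS); lra).
    lra.
Qed.

Lemma is_kappa_unique f q k1 k2 : is_kappa f q k1 -> is_kappa f q k2 -> k1 = k2.
Proof.
  intros (h1 & m1 & t1 & T1 & M1 & I1 & _ & ->) (h2 & m2 & t2 & T2 & M2 & I2 & _ & ->).
  rewrite (is_threshold_unique _ _ _ _ T1 T2) in I1.
  rewrite (improper_int_unique _ _ _ _ M1 M2), (improper_int_unique _ _ _ _ I1 I2).
  reflexivity.
Qed.

Lemma kappa_eq_of_is_kappa f q k : is_kappa f q k -> kappa f q = k.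
Proof.
  intros Hk; apply (is_kappa_unique f q); [unfold kappa; apply epsilon_spec; exists k|];
    exact Hk.
Qed.

Lemma is_kappa_moment_tail f q h T :
  is_threshold f q h -> (forall x, improper_int (fun y => y * f y) x (T x)) -> 0 < T 0 ->
  is_kappa f q (T h / T 0).
Proof. intros Hh HT HT0; exists h, (T 0), (T h); auto. Qed.

Section DensityTails.

Variables f S T : R -> R.
Hypothesis f_ge0 : forall y, 0 <= f y.
Hypothesis S_RInt : forall a b, a <= b -> is_RInt f a b (S a - S b).
Hypothesis T_RInt : forall a b, a <= b -> is_RInt (fun y => y * f y) a b (T a - T b).

Let scal_RInt x a b : a <= b -> is_RInt (fun y => scal x (f y)) a b (scal x (S a - S b)).
Proof. intros Hab; apply (is_RInt_scal (V := R_NormedModule)), S_RInt, Hab. Qed.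

(* This is [\int_x^h (y - x) f y dy >= 0], whichever of [x], [h] is larger. *)
Lemma moment_tail_sub_ge x h : T x - T h >= x * (S x - S h).
Proof.
  destruct (Rle_dec x h) as [Hxh|Hxh].
  - apply Rle_ge, (is_RInt_le _ _ x h _ _ Hxh (scal_RInt x x h Hxh) (T_RInt x h Hxh)).
    intros y Hy; apply Rmult_le_compat_r; [apply f_ge0 | lra].
  - assert (Hhx : h <= x) by lra.
    assert (T h - T x <= x * (S h - S x)); [|lra].
    apply (is_RInt_le _ _ h x _ _ Hhx (T_RInt h x Hhx) (scal_RInt x h x Hhx)).
    intros y Hy; apply Rmult_le_compat_r; [apply f_ge0 | lra].
Qed.

Lemma moment_tail_sub_le L x h :
  (forall y, y * f y <= L) -> x <= h -> T x - T h <= L * (h - x).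
Proof.
  intros HL Hxh.
  apply (is_RInt_le _ (fun _ => L) x h _ _ Hxh (T_RInt x h Hxh)); [|intros; apply HL].
  replace (L * (h - x)) with (scal (h - x) (L : R_NormedModule))
    by (unfold scal; simpl; unfold mult; simpl; ring).
  apply is_RInt_const.
Qed.

End DensityTails.

Lemma is_RInt_cutoff (phi Phi g : R -> R) x0 :
  0 < x0 -> (forall y, y < x0 -> phi y = 0) -> (forall y, x0 <= y -> phi y = g y) ->
  (forall y, 0 < y -> is_derive Phi y (g y)) -> (forall y, 0 < y -> continuous g y) ->
  forall a b, a <= b -> is_RInt phi a b (Phi (Rmax b x0) - Phi (Rmax a x0)).
Proof.
  intros Hx0 Hlow Hhigh HD HC.
  assert (Hbelow : forall a b, a <= b -> b <= x0 -> is_RInt phi a b 0).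
  { intros a b Hab Hb; apply is_RInt_ext with (f := fun _ => 0).
    { intros x Hx; rewrite Rmin_left, Rmax_right in Hx by lra; rewrite Hlow; lra. }
    pose proof (is_RInt_const (V := R_NormedModule) a b 0) as H.
    replace (scal (b - a) (0 : R_NormedModule)) with 0 in H; [exact H|].
    unfold scal; simpl; unfold mult; simpl; ring. }
  assert (Habove : forall a b, x0 <= a -> a <= b -> is_RInt phi a b (Phi b - Phi a)).
  { intros a b Ha Hab; apply is_RInt_ext with (f := g).
    { intros x Hx; rewrite Rmin_left, Rmax_right in Hx by lra; rewrite Hhigh; lra. }
    apply (is_RInt_derive Phi g); intros x Hx; rewrite Rmin_left in Hx by lra;
      [apply HD | apply HC]; lra. }
  intros a b Hab.
  destruct (Rle_dec b x0) as [Hb|Hb].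
  { rewrite !Rmax_right, Rminus_eq_0 by lra; apply Hbelow; lra. }
  destruct (Rle_dec x0 a) as [Ha|Ha].
  { rewrite !Rmax_left by lra; apply Habove; lra. }
  rewrite Rmax_left, Rmax_right by lra.
  replace (Phi b - Phi x0) with (plus (0 : R_NormedModule) (Phi b - Phi x0))
    by (unfold plus; simpl; ring).
  apply is_RInt_Chasles with x0; [apply Hbelow | apply Habove]; lra.
Qed.

Lemma exp_le_compat x y : x <= y -> exp x <= exp y.
Proof. intros [Hxy | ->]; [left; apply exp_increasing, Hxy | right; reflexivity]. Qed.

Lemma exp_sub_mul_ln_eventually_lt c s K : 0 < s -> 0 < K ->
  forall eps, 0 < eps -> exists M, forall y, M <= y -> K * exp (c - s * ln y) < eps.
Proof.
  intros Hs HK eps Heps.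
  set (l := ln (eps / (2 * K))).
  exists (exp ((c - l) / s)); intros y Hy.
  assert (Hln : (c - l) / s <= ln y).
  { rewrite <- (ln_exp ((c - l) / s)).
    apply ln_le; [apply exp_pos | exact Hy]. }
  assert (Hexp : exp (c - s * ln y) <= eps / (2 * K)).
  { rewrite <- (exp_ln (eps / (2 * K))) by (apply Rdiv_lt_0_compat; lra); fold l.
    apply exp_le_compat.
    apply Rmult_le_compat_l with (r := s) in Hln; [|lra].
    replace (s * ((c - l) / s)) with (c - l) in Hln by (field; lra).
    lra. }
  apply Rmult_le_compat_l with (r := K) in Hexp; [|lra].
  replace (K * (eps / (2 * K))) with (eps / 2) in Hexp by (field; lra).
  lra.
Qed.

Definition pareto_ratio (al x0 y : R) : R := exp (al * (ln x0 - ln y)).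

Definition pareto_survival (al x0 x : R) : R := pareto_ratio al x0 (Rmax x x0).
Definition pareto_moment_tail (al x0 x : R) : R :=
  al / (al - 1) * Rmax x x0 * pareto_ratio al x0 (Rmax x x0).

Definition pareto_quantile (al x0 q : R) : R := exp (ln x0 - ln q / al).

Section Pareto.

Variables al x0 : R.
Hypothesis al_gt1 : 1 < al.
Hypothesis x0_gt0 : 0 < x0.

Lemma pareto_density_below y : y < x0 -> pareto_density al x0 y = 0.
Proof. intros Hy; unfold pareto_density; destruct (Rle_dec x0 y); [lra | reflexivity]. Qed.

Lemma pareto_density_above y : x0 <= y -> pareto_density al x0 y = al / y * pareto_ratio al x0 y.
Proof.
  intros Hy; unfold pareto_density, pareto_ratio, Rpower.
  destruct (Rle_dec x0 y); [|lra].
  replace (- (al + 1) * ln y) with (- (al * ln y) + - ln y) by ring.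
  replace (al * (ln x0 - ln y)) with (al * ln x0 + - (al * ln y)) by ring.
  rewrite !exp_plus, exp_Ropp with (x := ln y), exp_ln by lra.
  field; lra.
Qed.

Lemma pareto_density_ge0 y : 0 <= pareto_density al x0 y.
Proof.
  unfold pareto_density, Rpower; destruct (Rle_dec x0 y); [|lra].
  pose proof (exp_pos (al * ln x0)); pose proof (exp_pos (- (al + 1) * ln y)).
  repeat apply Rmult_le_pos; lra.
Qed.

Lemma pareto_ratio_le1 y : x0 <= y -> pareto_ratio al x0 y <= 1.
Proof.
  intros Hy; unfold pareto_ratio; rewrite <- exp_0.
  assert (ln x0 <= ln y) by (apply ln_le; lra).
  apply exp_le_compat; nra.
Qed.

Lemma mul_pareto_density_le y : y * pareto_density al x0 y <= al.
Proof.
  destruct (Rlt_dec y x0) as [Hy|Hy].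
  - rewrite pareto_density_below by exact Hy; lra.
  - rewrite pareto_density_above by lra.
    replace (y * (al / y * pareto_ratio al x0 y)) with (al * pareto_ratio al x0 y)
      by (field; lra).
    pose proof (pareto_ratio_le1 y ltac:(lra)); nra.
Qed.

Lemma is_RInt_pareto_density a b : a <= b ->
  is_RInt (pareto_density al x0) a b (pareto_survival al x0 a - pareto_survival al x0 b).
Proof.
  intros Hab; unfold pareto_survival.
  replace (pareto_ratio al x0 (Rmax a x0) - pareto_ratio al x0 (Rmax b x0))
    with (- pareto_ratio al x0 (Rmax b x0) - - pareto_ratio al x0 (Rmax a x0)) by ring.
  apply (is_RInt_cutoff _ (fun y => - pareto_ratio al x0 y)
           (fun y => al / y * pareto_ratio al x0 y)); [exact x0_gt0 | | | | | exact Hab].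
  - exact pareto_density_below.
  - exact pareto_density_above.
  - intros y Hy; unfold pareto_ratio; auto_derive; [lra | unfold Rminus; field; lra].
  - intros y Hy; apply (@ex_derive_continuous R_AbsRing R_NormedModule).
    unfold pareto_ratio; auto_derive; lra.
Qed.

Lemma is_RInt_pareto_moment a b : a <= b ->
  is_RInt (fun y => y * pareto_density al x0 y) a b
    (pareto_moment_tail al x0 a - pareto_moment_tail al x0 b).
Proof.
  intros Hab; unfold pareto_moment_tail.
  set (Phi := fun y => - (al / (al - 1) * y * pareto_ratio al x0 y)).
  replace (_ - _) with (Phi (Rmax b x0) - Phi (Rmax a x0)) by (unfold Phi; ring).
  apply (is_RInt_cutoff _ Phi (fun y => al * pareto_ratio al x0 y));
    [exact x0_gt0 | | | | | exact Hab].
  - intros y Hy; rewrite pareto_density_below by exact Hy; ring.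
  - intros y Hy; rewrite pareto_density_above by exact Hy; field; lra.
  - intros y Hy; unfold Phi, pareto_ratio; auto_derive; [lra | unfold Rminus; field; lra].
  - intros y Hy; apply (@ex_derive_continuous R_AbsRing R_NormedModule).
    unfold pareto_ratio; auto_derive; lra.
Qed.

Lemma pareto_survival_above b : x0 <= b ->
  pareto_survival al x0 b = exp (al * ln x0 - al * ln b).
Proof.
  intros Hb; unfold pareto_survival, pareto_ratio; rewrite Rmax_left by exact Hb.
  f_equal; ring.
Qed.

Lemma pareto_moment_tail_above b : x0 <= b ->
  pareto_moment_tail al x0 b = al / (al - 1) * exp (al * ln x0 - (al - 1) * ln b).
Proof.
  intros Hb; unfold pareto_moment_tail, pareto_ratio; rewrite Rmax_left by exact Hb.
  replace (al * ln x0 - (al - 1) * ln b) with (ln b + al * (ln x0 - ln b)) by ring.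
  rewrite exp_plus, exp_ln by lra; ring.
Qed.

Lemma improper_int_pareto_density a :
  improper_int (pareto_density al x0) a (pareto_survival al x0 a).
Proof.
  apply improper_int_tail; [exact is_RInt_pareto_density|].
  intros eps Heps.
  destruct (exp_sub_mul_ln_eventually_lt (al * ln x0) al 1 ltac:(lra) Rlt_0_1 eps Heps)
    as [M HM].
  exists (Rmax M x0); intros b Hb.
  rewrite pareto_survival_above by (eapply Rle_trans; [apply Rmax_r | exact Hb]).
  rewrite Rabs_pos_eq by (left; apply exp_pos).
  specialize (HM b (Rle_trans _ _ _ (Rmax_l _ _) Hb)); lra.
Qed.

Lemma improper_int_pareto_moment a :
  improper_int (fun y => y * pareto_density al x0 y) a (pareto_moment_tail al x0 a).
Proof.
  apply improper_int_tail; [exact is_RInt_pareto_moment|].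
  intros eps Heps.
  assert (HK : 0 < al / (al - 1)) by (apply Rdiv_lt_0_compat; lra).
  destruct (exp_sub_mul_ln_eventually_lt (al * ln x0) (al - 1) _ ltac:(lra) HK eps Heps)
    as [M HM].
  exists (Rmax M x0); intros b Hb.
  rewrite pareto_moment_tail_above by (eapply Rle_trans; [apply Rmax_r | exact Hb]).
  rewrite Rabs_pos_eq by (apply Rmult_le_pos; [lra | left; apply exp_pos]).
  exact (HM b (Rle_trans _ _ _ (Rmax_l _ _) Hb)).
Qed.

Section Quantile.

Variable q : R.
Hypothesis q_range : 0 < q < 1.

Let ln_q_lt0 : ln q < 0.
Proof. rewrite <- ln_1; apply ln_increasing; lra. Qed.

Let ln_pareto_quantile : ln (pareto_quantile al x0 q) = ln x0 - ln q / al.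
Proof. apply ln_exp. Qed.

Lemma pareto_quantile_gt : x0 < pareto_quantile al x0 q.
Proof.
  unfold pareto_quantile; rewrite <- (exp_ln x0) at 1 by exact x0_gt0.
  apply exp_increasing.
  assert (0 < - ln q / al) by (apply Rdiv_lt_0_compat; lra).
  unfold Rdiv in *; lra.
Qed.

Lemma pareto_survival_quantile : pareto_survival al x0 (pareto_quantile al x0 q) = q.
Proof.
  rewrite pareto_survival_above by (left; exact pareto_quantile_gt).
  rewrite ln_pareto_quantile.
  replace (al * ln x0 - al * (ln x0 - ln q / al)) with (ln q) by (field; lra).
  apply exp_ln; lra.
Qed.

Lemma pareto_quantile_le x : pareto_survival al x0 x <= q -> pareto_quantile al x0 q <= x.
Proof.
  intros Hx; apply Rnot_lt_le; intros Hlt.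
  set (y := Rmax x x0).
  assert (Hy : x0 <= y) by apply Rmax_r.
  assert (Hln : ln y < ln x0 - ln q / al).
  { rewrite <- ln_pareto_quantile; apply ln_increasing.
    - lra.
    - apply Rmax_lub_lt; [lra | exact pareto_quantile_gt]. }
  assert (HSx : pareto_survival al x0 x = exp (al * ln x0 - al * ln y))
    by (unfold pareto_survival, pareto_ratio; fold y; f_equal; ring).
  assert (q < exp (al * ln x0 - al * ln y)); [|lra].
  rewrite <- (exp_ln q) at 1 by lra; apply exp_increasing.
  apply Rmult_lt_compat_l with (r := al) in Hln; [|lra].
  replace (al * (ln x0 - ln q / al)) with (al * ln x0 - ln q) in Hln by (field; lra).
  lra.
Qed.

Lemma is_threshold_pareto : is_threshold (pareto_density al x0) q (pareto_quantile al x0 q).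
Proof.
  apply (is_threshold_tail _ (pareto_survival al x0)).
  - exact improper_int_pareto_density.
  - left; apply exp_pos.
  - rewrite pareto_survival_quantile; lra.
  - intros x _; exact (pareto_quantile_le x).
Qed.

Lemma pareto_moment_tail_0 : pareto_moment_tail al x0 0 = al / (al - 1) * x0.
Proof.
  unfold pareto_moment_tail, pareto_ratio; rewrite Rmax_right by lra.
  rewrite Rminus_eq_0, Rmult_0_r, exp_0; ring.
Qed.

Lemma pareto_moment_tail_quantile :
  pareto_moment_tail al x0 (pareto_quantile al x0 q)
  = pareto_moment_tail al x0 0 * Rpower q ((al - 1) / al).
Proof.
  rewrite pareto_moment_tail_0; unfold pareto_moment_tail.
  fold (pareto_survival al x0 (pareto_quantile al x0 q)).
  rewrite pareto_survival_quantile, Rmax_left by (left; exact pareto_quantile_gt).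
  unfold pareto_quantile, Rpower.
  replace (ln x0 - ln q / al) with (ln x0 + - ln q / al) by (unfold Rdiv; ring).
  replace ((al - 1) / al * ln q) with (- ln q / al + ln q) by (field; lra).
  rewrite !exp_plus, !exp_ln by lra; ring.
Qed.

Lemma is_kappa_pareto : is_kappa (pareto_density al x0) q (Rpower q ((al - 1) / al)).
Proof.
  assert (HT0 : 0 < pareto_moment_tail al x0 0).
  { rewrite pareto_moment_tail_0; apply Rmult_lt_0_compat; [|exact x0_gt0].
    apply Rdiv_lt_0_compat; lra. }
  replace (Rpower q ((al - 1) / al))
    with (pareto_moment_tail al x0 (pareto_quantile al x0 q) / pareto_moment_tail al x0 0)
    by (rewrite pareto_moment_tail_quantile; field; lra).
  apply is_kappa_moment_tail;
    [exact is_threshold_pareto | exact improper_int_pareto_moment | exact HT0].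
Qed.

Lemma kappa_pareto : kappa (pareto_density al x0) q = Rpower q ((al - 1) / al).
Proof. exact (kappa_eq_of_is_kappa _ _ _ is_kappa_pareto). Qed.

End Quantile.

End Pareto.

Lemma sumN_ext m f g : (forall i, (i < m)%nat -> f i = g i) -> sumN m f = sumN m g.
Proof.
  induction m as [|m IHm]; intros Hfg; simpl; [reflexivity|].
  rewrite IHm, Hfg; [reflexivity | lia | intros; apply Hfg; lia].
Qed.

Lemma sumN_le m f g : (forall i, (i < m)%nat -> f i <= g i) -> sumN m f <= sumN m g.
Proof.
  induction m as [|m IHm]; intros Hfg; simpl; [lra|].
  apply Rplus_le_compat; [apply IHm; intros; apply Hfg | apply Hfg]; lia.
Qed.

Lemma sumN_lt m f g : (0 < m)%nat -> (forall i, (i < m)%nat -> f i < g i) ->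
  sumN m f < sumN m g.
Proof.
  destruct m as [|m]; [lia|]; intros _ Hfg; simpl.
  apply Rplus_le_lt_compat; [apply sumN_le; intros; left; apply Hfg | apply Hfg]; lia.
Qed.

Lemma sumN_plus m f g : sumN m (fun i => f i + g i) = sumN m f + sumN m g.
Proof. induction m as [|m IHm]; simpl; [|rewrite IHm]; ring. Qed.

Lemma sumN_minus m f g : sumN m (fun i => f i - g i) = sumN m f - sumN m g.
Proof. induction m as [|m IHm]; simpl; [|rewrite IHm]; ring. Qed.

Lemma sumN_mull m c f : sumN m (fun i => c * f i) = c * sumN m f.
Proof. induction m as [|m IHm]; simpl; [|rewrite IHm]; ring. Qed.

Lemma sumN_mulr m c f : sumN m (fun i => f i * c) = sumN m f * c.
Proof. induction m as [|m IHm]; simpl; [|rewrite IHm]; ring. Qed.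

Lemma sumN_weights_pos m (w : nat -> R) : sumN m w = 1 -> (0 < m)%nat.
Proof. destruct m; simpl; [lra | lia]. Qed.

Lemma sumN_mean_gt m (w a : nat -> R) c :
  (forall i, (i < m)%nat -> c < a i) -> (forall i, (i < m)%nat -> 0 < w i) ->
  sumN m w = 1 -> c < sumN m (fun i => w i * a i).
Proof.
  intros Ha Hw Hs.
  replace c with (sumN m (fun i => w i * c)) by (rewrite sumN_mulr, Hs; ring).
  apply sumN_lt; [exact (sumN_weights_pos m w Hs)|].
  intros i Hi; apply Rmult_lt_compat_l; [apply Hw | apply Ha]; exact Hi.
Qed.

Lemma exp_ge_tangent u z : exp z * (1 + (u - z)) <= exp u.
Proof.
  replace (exp u) with (exp z * exp (u - z)) by (rewrite <- exp_plus; f_equal; ring).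
  apply Rmult_le_compat_l; [left; apply exp_pos | apply exp_ineq1_le].
Qed.

Lemma inv_gt_tangent a b : 0 < a -> 0 < b -> a <> b -> / b - (a - b) / (b * b) < / a.
Proof.
  intros Ha Hb Hab.
  assert (0 < (a - b) ^ 2 / (a * (b * b))).
  { apply Rdiv_lt_0_compat; [apply pow2_gt_0; lra | apply Rmult_lt_0_compat; nra]. }
  replace (/ a) with (/ b - (a - b) / (b * b) + (a - b) ^ 2 / (a * (b * b))) by (field; lra).
  lra.
Qed.

Lemma inv_ge_tangent a b : 0 < a -> 0 < b -> / b - (a - b) / (b * b) <= / a.
Proof.
  intros Ha Hb; destruct (Req_dec a b) as [->|Hab].
  - unfold Rdiv; rewrite Rminus_eq_0; lra.
  - left; apply inv_gt_tangent; assumption.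
Qed.

Lemma exp_convex2 t u v : 0 <= t <= 1 ->
  exp (t * u + (1 - t) * v) <= t * exp u + (1 - t) * exp v.
Proof.
  intros Ht; set (z := t * u + (1 - t) * v).
  pose proof (exp_ge_tangent u z); pose proof (exp_ge_tangent v z).
  replace (exp z) with (t * (exp z * (1 + (u - z))) + (1 - t) * (exp z * (1 + (v - z))))
    by (unfold z; ring).
  apply Rplus_le_compat; apply Rmult_le_compat_l; lra.
Qed.

Lemma inv_strict_convex2 t a1 a2 : 0 < t < 1 -> 0 < a1 -> 0 < a2 -> a1 <> a2 ->
  / (t * a1 + (1 - t) * a2) < t / a1 + (1 - t) / a2.
Proof.
  intros Ht H1 H2 H12; set (A := t * a1 + (1 - t) * a2).
  assert (HA : 0 < A) by (unfold A; nra).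
  assert (H1A : a1 <> A) by (unfold A; intros E; apply H12; nra).
  assert (H2A : a2 <> A) by (unfold A; intros E; apply H12; nra).
  pose proof (inv_gt_tangent a1 A H1 HA H1A); pose proof (inv_gt_tangent a2 A H2 HA H2A).
  assert (Hmean : t * (a1 - A) + (1 - t) * (a2 - A) = 0) by (unfold A; ring).
  replace (/ A) with (t * (/ A - (a1 - A) / (A * A)) + (1 - t) * (/ A - (a2 - A) / (A * A))).
  - unfold Rdiv at 3 4; apply Rplus_lt_compat; apply Rmult_lt_compat_l; lra.
  - replace (_ + _) with (/ A - (t * (a1 - A) + (1 - t) * (a2 - A)) / (A * A)) by (field; lra).
    rewrite Hmean; field; lra.
Qed.

Lemma sumN_exp_jensen m (w u : nat -> R) :
  (forall i, (i < m)%nat -> 0 <= w i) -> sumN m w = 1 ->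
  exp (sumN m (fun i => w i * u i)) <= sumN m (fun i => w i * exp (u i)).
Proof.
  intros Hw Hs; set (z := sumN m (fun i => w i * u i)).
  apply Rle_trans with (sumN m (fun i => w i * (exp z * (1 + (u i - z))))).
  - rewrite (sumN_ext m _ (fun i => w i * (exp z * (1 - z)) + exp z * (w i * u i)))
      by (intros; ring).
    rewrite sumN_plus, sumN_mulr, sumN_mull, Hs; fold z; lra.
  - apply sumN_le; intros i Hi; apply Rmult_le_compat_l; [apply Hw, Hi | apply exp_ge_tangent].
Qed.

Lemma sumN_inv_jensen m (w a : nat -> R) :
  (forall i, (i < m)%nat -> 0 <= w i) -> (forall i, (i < m)%nat -> 0 < a i) ->
  sumN m w = 1 -> 0 < sumN m (fun i => w i * a i) ->
  / sumN m (fun i => w i * a i) <= sumN m (fun i => w i / a i).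
Proof.
  intros Hw Ha Hs; set (b := sumN m (fun i => w i * a i)); intros Hb.
  apply Rle_trans with (sumN m (fun i => w i * (/ b - (a i - b) / (b * b)))).
  - rewrite (sumN_ext m _ (fun i => w i * (/ b + b / (b * b)) - (w i * a i) * / (b * b)))
      by (intros; unfold Rdiv; ring).
    rewrite sumN_minus, !sumN_mulr, Hs; fold b; right; field; lra.
  - apply sumN_le; intros i Hi; unfold Rdiv at 2; apply Rmult_le_compat_l;
      [apply Hw, Hi | apply inv_ge_tangent; [apply Ha, Hi | exact Hb]].
Qed.

(* With [c = - ln q > 0], [q ^ ((a - 1) / a) = exp (ln q + c / a)]: an increasing convex
   function of the convex function [/ a]. *)
Lemma Rpower_pareto_exponent q a : 0 < q -> 0 < a ->
  Rpower q ((a - 1) / a) = exp (ln q + - ln q * / a).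
Proof. intros Hq Ha; unfold Rpower; f_equal; field; lra. Qed.

Section KappaConvexity.

Variable q : R.
Hypothesis q_range : 0 < q < 1.

Let minus_ln_q_gt0 : 0 < - ln q.
Proof. assert (ln q < ln 1) by (apply ln_increasing; lra); rewrite ln_1 in H; lra. Qed.

Lemma pareto_kappa_strict_convex a1 a2 t :
  1 < a1 -> 1 < a2 -> a1 <> a2 -> 0 < t < 1 ->
  Rpower q ((t * a1 + (1 - t) * a2 - 1) / (t * a1 + (1 - t) * a2))
  < t * Rpower q ((a1 - 1) / a1) + (1 - t) * Rpower q ((a2 - 1) / a2).
Proof.
  intros H1 H2 H12 Ht.
  assert (0 < t * a1 + (1 - t) * a2) by nra.
  rewrite !Rpower_pareto_exponent by lra.
  apply Rlt_le_trans
    with (exp (t * (ln q + - ln q * / a1) + (1 - t) * (ln q + - ln q * / a2))).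
  - apply exp_increasing.
    replace (t * (ln q + - ln q * / a1) + (1 - t) * (ln q + - ln q * / a2))
      with (ln q + - ln q * (t / a1 + (1 - t) / a2)) by (field; lra).
    apply Rplus_lt_compat_l, Rmult_lt_compat_l; [exact minus_ln_q_gt0|].
    apply inv_strict_convex2; lra.
  - apply exp_convex2; lra.
Qed.

Lemma pareto_kappa_jensen m (w a : nat -> R) :
  (forall i, (i < m)%nat -> 1 < a i) -> (forall i, (i < m)%nat -> 0 < w i) ->
  sumN m w = 1 ->
  let abar := sumN m (fun i => w i * a i) in
  Rpower q ((abar - 1) / abar) <= sumN m (fun i => w i * Rpower q ((a i - 1) / a i)).
Proof.
  intros Ha Hw Hs abar.
  assert (Habar : 1 < abar) by exact (sumN_mean_gt m w a 1 Ha Hw Hs).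
  rewrite (sumN_ext m _ (fun i => w i * exp (ln q + - ln q * / a i)))
    by (intros i Hi; rewrite Rpower_pareto_exponent by (specialize (Ha i Hi); lra); reflexivity).
  rewrite Rpower_pareto_exponent by lra.
  apply Rle_trans with (exp (sumN m (fun i => w i * (ln q + - ln q * / a i))));
    [apply exp_le_compat | apply sumN_exp_jensen; [intros; left; auto | exact Hs]].
  replace (sumN m (fun i => w i * (ln q + - ln q * / a i)))
    with (ln q + - ln q * sumN m (fun i => w i / a i)).
  - apply Rplus_le_compat_l, Rmult_le_compat_l; [lra|].
    apply sumN_inv_jensen; [intros; left; auto | | exact Hs | fold abar; lra].
    intros i Hi; specialize (Ha i Hi); lra.
  - rewrite (sumN_ext m (fun i => w i * (ln q + - ln q * / a i))
               (fun i => w i * ln q + - ln q * (w i / a i))) by (intros; unfold Rdiv; ring).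
    rewrite sumN_plus, sumN_mulr, sumN_mull, Hs; ring.
Qed.

End KappaConvexity.

(* [T x >= K] wherever [S x > q], i.e. below [h], and the Lipschitz bound on [T]
   carries this to [h]. *)
Lemma moment_tail_ge_at_threshold (S T : R -> R) q h K L :
  0 < L -> 0 <= h -> (forall x, 0 <= x < h -> q < S x) ->
  (forall x, T x - K >= x * (S x - q)) ->
  (forall x, x <= h -> T x - T h <= L * (h - x)) ->
  K <= T h.
Proof.
  intros HL Hh HS HK HT; apply Rnot_lt_le; intros Hlt.
  destruct (Req_dec h 0) as [->|Hh0]; [pose proof (HK 0); lra|].
  set (d := Rmin (h / 2) ((K - T h) / (2 * L))).
  assert (Hd : 0 < d) by (apply Rmin_glb_lt; [|apply Rdiv_lt_0_compat]; lra).
  assert (Hdh : d <= h / 2) by apply Rmin_l.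
  assert (HdK : L * d <= (K - T h) / 2).
  { apply Rle_trans with (L * ((K - T h) / (2 * L))).
    - apply Rmult_le_compat_l; [lra | apply Rmin_r].
    - right; field; lra. }
  assert (K <= T (h - d)).
  { pose proof (HK (h - d)); pose proof (HS (h - d) ltac:(lra)).
    assert (0 <= (h - d) * (S (h - d) - q)) by (apply Rmult_le_pos; lra).
    lra. }
  pose proof (HT (h - d) ltac:(lra)).
  replace (h - (h - d)) with d in H0 by ring.
  lra.
Qed.

Lemma xmin_norm_range a : 1 < a -> 0 < xmin_norm a < 1.
Proof.
  intros Ha; unfold xmin_norm; split; [apply Rdiv_lt_0_compat; lra|].
  apply (Rmult_lt_reg_r a); [lra|]; field_simplify; lra.
Qed.

Lemma pareto_moment_tail_norm_0 a : 1 < a -> pareto_moment_tail a (xmin_norm a) 0 = 1.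
Proof.
  intros Ha; rewrite pareto_moment_tail_0 by (apply xmin_norm_range, Ha).
  unfold xmin_norm; field; lra.
Qed.

Section NormalizedPareto.

Variables (q a : R).
Hypothesis q_range : 0 < q < 1.
Hypothesis a_gt1 : 1 < a.

Let xmin_pos : 0 < xmin_norm a.
Proof. apply xmin_norm_range, a_gt1. Qed.

Lemma kappa_pareto_norm :
  kappa (pareto_density a (xmin_norm a)) q
  = pareto_moment_tail a (xmin_norm a) (pareto_quantile a (xmin_norm a) q).
Proof.
  rewrite (kappa_pareto a _ a_gt1 xmin_pos q q_range).
  rewrite pareto_moment_tail_quantile, (pareto_moment_tail_norm_0 a a_gt1) by assumption; ring.
Qed.

(* [/ q] is beyond the quantile because the scale [xmin_norm a] is below 1. *)
Lemma pareto_survival_norm_inv_le : pareto_survival a (xmin_norm a) (/ q) <= q.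
Proof.
  assert (Hinv : 1 < / q) by (rewrite <- Rinv_1; apply Rinv_lt_contravar; lra).
  pose proof (xmin_norm_range a a_gt1) as Hx.
  rewrite pareto_survival_above, ln_Rinv by lra.
  rewrite <- (exp_ln q) at 2 by lra; apply exp_le_compat.
  assert (ln q < 0) by (rewrite <- ln_1; apply ln_increasing; lra).
  assert (ln (xmin_norm a) < 0) by (rewrite <- ln_1; apply ln_increasing; lra).
  nra.
Qed.

End NormalizedPareto.

Section Mixture.

Variables (m : nat) (w al : nat -> R) (q : R).
Hypothesis q_range : 0 < q < 1.
Hypothesis al_gt1 : forall i, (i < m)%nat -> 1 < al i.
Hypothesis w_gt0 : forall i, (i < m)%nat -> 0 < w i.
Hypothesis w_sum1 : sumN m w = 1.

Definition mixture_survival (x : R) : R :=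
  sumN m (fun i => w i * pareto_survival (al i) (xmin_norm (al i)) x).
Definition mixture_moment_tail (x : R) : R :=
  sumN m (fun i => w i * pareto_moment_tail (al i) (xmin_norm (al i)) x).

Let mixture_kappa_bound : R :=
  sumN m (fun i => w i * kappa (pareto_density (al i) (xmin_norm (al i))) q).

Let xmin_pos i : (i < m)%nat -> 0 < xmin_norm (al i).
Proof. intros Hi; apply xmin_norm_range, al_gt1, Hi. Qed.

Lemma improper_int_mixture_density x :
  improper_int (mixture_density m w al) x (mixture_survival x).
Proof.
  apply (improper_int_sumN m w (fun i => pareto_density (al i) (xmin_norm (al i)))).
  intros i Hi; apply improper_int_pareto_density; [apply al_gt1 | apply xmin_pos]; exact Hi.
Qed.

Lemma improper_int_mixture_moment x :
  improper_int (fun y => y * mixture_density m w al y) x (mixture_moment_tail x).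
Proof.
  replace (fun y => y * mixture_density m w al y)
    with (fun y => sumN m (fun i => w i * (y * pareto_density (al i) (xmin_norm (al i)) y))).
  - apply (improper_int_sumN m w (fun i y => y * pareto_density (al i) (xmin_norm (al i)) y)).
    intros i Hi; apply improper_int_pareto_moment; [apply al_gt1 | apply xmin_pos]; exact Hi.
  - apply functional_extensionality; intros y; unfold mixture_density.
    rewrite <- sumN_mull; apply sumN_ext; intros; ring.
Qed.

Lemma mixture_moment_tail_0 : mixture_moment_tail 0 = 1.
Proof.
  rewrite <- w_sum1; unfold mixture_moment_tail; apply sumN_ext; intros i Hi.
  rewrite (pareto_moment_tail_norm_0 _ (al_gt1 i Hi)); ring.
Qed.

(* [moment_tail_sub_ge] for each component at its own quantile, where its tail mass is
   [q] and its tail moment is its quantile contribution. *)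
Lemma mixture_moment_tail_sub_ge x :
  mixture_moment_tail x - mixture_kappa_bound >= x * (mixture_survival x - q).
Proof.
  unfold mixture_moment_tail, mixture_kappa_bound, mixture_survival.
  replace (x * (_ - q))
    with (sumN m (fun i => x * (w i * pareto_survival (al i) (xmin_norm (al i)) x - w i * q)))
    by (rewrite sumN_mull, sumN_minus, sumN_mulr, w_sum1; ring).
  rewrite <- sumN_minus; apply Rle_ge, sumN_le; intros i Hi.
  pose proof (al_gt1 i Hi) as Ha; pose proof (xmin_pos i Hi) as Hx.
  rewrite kappa_pareto_norm by assumption.
  pose proof (moment_tail_sub_ge _ _ _ (pareto_density_ge0 (al i) _ Ha)
                (is_RInt_pareto_density (al i) _ Hx) (is_RInt_pareto_moment (al i) _ Ha Hx)
                x (pareto_quantile (al i) (xmin_norm (al i)) q)) as Hcomp.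
  rewrite pareto_survival_quantile in Hcomp by assumption.
  pose proof (w_gt0 i Hi); nra.
Qed.

Lemma mixture_moment_tail_sub_le x h : x <= h ->
  mixture_moment_tail x - mixture_moment_tail h
  <= sumN m (fun i => w i * al i) * (h - x).
Proof.
  intros Hxh; unfold mixture_moment_tail.
  rewrite <- sumN_minus, <- sumN_mulr; apply sumN_le; intros i Hi.
  pose proof (al_gt1 i Hi) as Ha; pose proof (xmin_pos i Hi) as Hx.
  pose proof (moment_tail_sub_le _ _ (is_RInt_pareto_moment (al i) _ Ha Hx) (al i) x h
                (mul_pareto_density_le (al i) _ Ha Hx) Hxh).
  pose proof (w_gt0 i Hi); nra.
Qed.

Lemma kappa_mixture_ge :
  mixture_kappa_bound <= kappa (mixture_density m w al) q.
Proof.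
  destruct (is_threshold_exists (mixture_density m w al) q) as [h Hh].
  { exists (/ q); apply (exceed_set_tail _ _ q improper_int_mixture_density).
    split; [left; apply Rinv_0_lt_compat; lra|].
    apply Rle_trans with (sumN m (fun i => w i * q)); [|rewrite sumN_mulr, w_sum1; lra].
    apply sumN_le; intros i Hi; apply Rmult_le_compat_l; [left; apply w_gt0, Hi|].
    apply pareto_survival_norm_inv_le; [exact q_range | apply al_gt1, Hi]. }
  pose proof (is_kappa_moment_tail _ _ _ _ Hh improper_int_mixture_moment) as Hk.
  rewrite mixture_moment_tail_0, Rdiv_1_r in Hk; rewrite (kappa_eq_of_is_kappa _ _ _ (Hk Rlt_0_1)).
  destruct (is_threshold_tail_gt _ _ q h improper_int_mixture_density Hh) as [Hh0 HS].
  apply (moment_tail_ge_at_threshold mixture_survival mixture_moment_tail q h _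
           (sumN m (fun i => w i * al i))); try assumption.
  - apply (Rlt_trans _ 1); [lra | exact (sumN_mean_gt m w al 1 al_gt1 w_gt0 w_sum1)].
  - exact mixture_moment_tail_sub_ge.
  - intros x Hx; exact (mixture_moment_tail_sub_le x h Hx).
Qed.

End Mixture.

Theorem mainTheorem5 :
  forall q : R, 0 < q < 1 ->
  (forall alpha xmin : R, 1 < alpha -> 0 < xmin ->
     is_kappa (pareto_density alpha xmin) q (Rpower q ((alpha - 1) / alpha)) /\
     kappa (pareto_density alpha xmin) q = Rpower q ((alpha - 1) / alpha)) /\
  (forall xmin : R -> R, (forall a, 1 < a -> 0 < xmin a) ->
     forall a1 a2 t : R, 1 < a1 -> 1 < a2 -> a1 <> a2 -> 0 < t < 1 ->
       kappa (pareto_density (t * a1 + (1 - t) * a2) (xmin (t * a1 + (1 - t) * a2))) q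
       < t * kappa (pareto_density a1 (xmin a1)) q
         + (1 - t) * kappa (pareto_density a2 (xmin a2)) q) /\
  (forall (m : nat) (alpha w : nat -> R),
     (forall i, (i < m)%nat -> 1 < alpha i) ->
     (forall i, (i < m)%nat -> 0 < w i) ->
     sumN m w = 1 ->
     let abar := sumN m (fun i => w i * alpha i) in
     kappa (mixture_density m w alpha) q
       >= sumN m (fun i => w i * kappa (pareto_density (alpha i) (xmin_norm (alpha i))) q) /\
     sumN m (fun i => w i * kappa (pareto_density (alpha i) (xmin_norm (alpha i))) q)
       >= kappa (pareto_density abar (xmin_norm abar)) q).
Proof.
  intros q Hq; split; [|split].
  - intros al x0 Ha Hx; split; [apply is_kappa_pareto | apply kappa_pareto]; assumption.
  - intros xmin Hxmin a1 a2 t H1 H2 H12 Ht.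
    assert (HA : 1 < t * a1 + (1 - t) * a2) by nra.
    rewrite !kappa_pareto by auto.
    apply pareto_kappa_strict_convex; assumption.
  - intros m al w Ha Hw Hs abar; split.
    + apply Rle_ge, kappa_mixture_ge; assumption.
    + assert (Habar : 1 < abar) by exact (sumN_mean_gt m w al 1 Ha Hw Hs).
      rewrite kappa_pareto by (try apply xmin_norm_range; assumption).
      rewrite (sumN_ext m _ (fun i => w i * Rpower q ((al i - 1) / al i))).
      * apply Rle_ge, pareto_kappa_jensen; assumption.
      * intros i Hi; rewrite kappa_pareto by (try apply xmin_norm_range; auto); reflexivity.
Qed.
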